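(* The VC-dimension of the edge relation on the Johnson graph $J(m,k)$ equals $4$ if and only if $1<k<m-1$ and $\binom{m}{k}\ge 16$.
   Context: For $m\ge k$ and a set $X$ with $|X|=m$, the Johnson graph $J(m,k)$ has as vertices the $k$-element subsets of $X$ (so it has $\binom mk$ vertices), two vertices adjacent iff their intersection has size $k-1$. The VC-dimension of the edge relation on a graph $G$ is the largest size of a set $A\subseteq V(G)$ such that $\{A\cap N(v)\mid v\in V(G)\}$ equals the power set of $A$, where $N(v)$ is the set of vertices adjacent to $v$. *)

From mathcomp Require Import all_boot.
Set Implicit Arguments. Unset Strict Implicit. Unset Printing Implicit Defensive.

Definition nbhd (V : finType) (e : rel V) (v : V) : {set V} := [set w | e v w].

Definition shattered (V : finType) (e : rel V) (A : {set V}) : bool :=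
  [forall B : {set V}, (B \subset A) ==> [exists v : V, A :&: nbhd e v == B]].

Definition vc_dim (V : finType) (e : rel V) : nat :=
  \max_(A : {set V} | shattered e A) #|A|.

Definition johnson_vertex (m k : nat) : Type := {A : {set 'I_m} | #|A| == k}.

(* Adjacency: intersection has size k-1 (written #|A :&: B| + 1 = k to avoid
   truncated subtraction when k = 0). *)
Definition johnson_adj (m k : nat) : rel (johnson_vertex m k) :=
  fun A B => #|val A :&: val B| + 1 == k.

From mathcomp Require Import all_boot zify.
Set Implicit Arguments. Unset Strict Implicit. Unset Printing Implicit Defensive.

(* A shattered set A has a vertex v adjacent to all of A, so every a in A is a
   swap v - x + y with x in v and y outside v; we view it as the cell (x, y).
   For any vertex w, whether w ~ a depends only on t = |v \ w| and on whether
   x lies in v \ w and y in w \ v: the trace of N(w) on the swaps is all of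
   them (t = 0), none (t >= 3), a cross {(x, y) | (x = p) xor (y = q)} (t = 1)
   or a rectangle {(x, y) | x in P, y in Q} with |P| = |Q| = 2 (t = 2).
   Up to relabelling there are finitely many configurations of five distinct
   cells, and a computation shows that none of them is shattered by these
   traces; hence the VC-dimension is at most 4.
   Conversely, a shattered 4-set needs 2^4 <= C(m, k) vertices and excludes
   k = 1 and k = m - 1, where J(m, k) is complete.  When 1 < k < m - 1 and
   C(m, k) >= 16, one of J(6, 3), J(7, 2), J(7, 5) embeds into J(m, k) as an
   induced subgraph by adding k - k0 common points, and each of them has an
   explicit shattered 4-set. *)

(** * Shattering and VC-dimension *)

Section Shattering.
Variables (V : finType) (e : rel V).

Lemma shatteredP (A : {set V}) :
  reflect (forall B : {set V}, B \subset A -> exists w, A :&: nbhd e w = B)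
          (shattered e A).
Proof.
apply: (iffP forallP) => [sh B BA | sh B].
  by move: (sh B); rewrite BA => /existsP [w /eqP]; exists w.
by apply/implyP => /sh [w wB]; apply/existsP; exists w; apply/eqP.
Qed.

Lemma shattered_le_vc_dim (A : {set V}) : shattered e A -> #|A| <= vc_dim e.
Proof. exact: (leq_bigmax_cond (F := fun A : {set V} => #|A|)). Qed.

Lemma vc_dim_le n : (forall A, shattered e A -> #|A| <= n) -> vc_dim e <= n.
Proof. by move/bigmax_leqP. Qed.

Lemma vc_dim_attained :
  0 < vc_dim e -> exists2 A : {set V}, shattered e A & #|A| = vc_dim e.
Proof.
move=> vc_gt0; have [A0 shA0 | no_sh] := pickP (shattered e); last first.
  by move: vc_gt0; rewrite /vc_dim big_pred0.
have [|A shA vcA] := eq_bigmax_cond (fun A : {set V} => #|A|) (A := shattered e).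
  by apply/card_gt0P; exists A0.
by exists A; last exact/esym/vcA.
Qed.

Lemma shattered_card_le (A : {set V}) : shattered e A -> 2 ^ #|A| <= #|V|.
Proof.
move/shatteredP=> sh.
have /fin_all_exists [w wB] : forall B : {set V}, exists w,
    B \subset A -> A :&: nbhd e w = B.
  move=> B; have [/sh [w wB] | _] := boolP (B \subset A); first by exists w.
  by have [w _] := sh _ (sub0set A); exists w.
rewrite -card_powerset -(card_in_imset (f := w)) ?max_card //.
by move=> B1 B2; rewrite !inE => /wB wB1 /wB wB2 wB12; rewrite -wB1 -wB2 wB12.
Qed.

Lemma shattered_complete (A : {set V}) :
  (forall u w, e u w = (u != w)) -> shattered e A -> #|A| <= 1.
Proof.
move=> e_neq /shatteredP /(_ set0 (sub0set A)) [w /setP Aw].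
rewrite -(cards1 w); apply/subset_leq_card/subsetP => u uA.
by move: (Aw u); rewrite !inE uA e_neq eq_sym => /negbFE.
Qed.

Lemma shattered_of_patterns n (g : 'I_n -> V) :
    (forall b : {set 'I_n}, exists w, forall i, e w (g i) = (i \in b)) ->
  exists2 A : {set V}, shattered e A & #|A| = n.
Proof.
move=> pat; have g_inj : injective g.
  move=> i j gij; have [w wi] := pat [set i].
  by apply/eqP; rewrite eq_sym -in_set1 -wi -gij wi set11.
exists (g @: setT); last by rewrite card_imset // cardsT card_ord.
apply/shatteredP => B BA; have [w wB] := pat [set i | g i \in B].
exists w; apply/setP => u; rewrite !inE.
have [/imsetP [i _ ->] | uA] := boolP (u \in g @: setT).
  by rewrite wB inE.
by apply/esym/negbTE; apply: contra uA => /(subsetP BA).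
Qed.

End Shattering.

Fixpoint all_seqs (T : Type) (alphabet : seq T) (n : nat) : seq (seq T) :=
  if n is n'.+1 then [seq a :: s | a <- alphabet, s <- all_seqs alphabet n']
  else [:: [::]].

Lemma mem_all_seqs (T : eqType) (alphabet s : seq T) n :
  (s \in all_seqs alphabet n) = (size s == n) && all (mem alphabet) s.
Proof.
elim: n s => [|n IHn] [|a s] //=.
  by apply/negbTE/allpairsPdep => -[b [t []]].
rewrite eqSS; apply/allpairsPdep/and3P => [[b [t [bA tn [-> ->]]]] | [sn aA sA]].
  by move: tn; rewrite IHn => /andP [-> ->].
by exists a, s; rewrite IHn sn.
Qed.

(** * Traces on cells *)

Section CellPredicates.
Variables (I T1 T2 : eqType) (X : I -> T1) (Y : I -> T2).

Definition cross_pred (p : T1) (q : T2) : pred I := fun i => (X i == p) != (Y i == q).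

Definition rect_pred (p1 p2 : T1) (q1 q2 : T2) : pred I :=
  fun i => ((X i == p1) || (X i == p2)) && ((Y i == q1) || (Y i == q2)).

End CellPredicates.

Definition cell_trace (I : finType) (T1 T2 : eqType) (X : I -> T1) (Y : I -> T2)
    (S : {set I}) : Prop :=
  [\/ S = setT, S = set0, exists p q, S = [set i | cross_pred X Y p q i]
    | exists p1 p2 q1 q2, S = [set i | rect_pred X Y p1 p2 q1 q2 i]].

(* Subsets of ['I_5] are encoded as boolean vectors, and labels as [nat]s, so
   that the check below reduces under [vm_compute]. *)
Definition vec5 (P : pred nat) : seq bool := [seq P i | i <- iota 0 5].

Lemma vec5_nth (v : seq bool) (P : pred nat) :
  size v = 5 -> (forall i : 'I_5, nth false v i = P i) -> v = vec5 P.
Proof.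
move=> v5 vP; rewrite -(mkseq_nth false v) v5; apply/eq_in_map => i.
by rewrite mem_iota => /andP [_ i5]; exact: (vP (Ordinal i5)).
Qed.

Definition ordered_pairs : seq (nat * nat) :=
  [seq (a, b) | a <- iota 0 6, b <- iota a (6 - a)].

Definition cell_vectors (f g : nat -> nat) : seq (seq bool) :=
  [seq vec5 (cross_pred f g p q) | p <- iota 0 6, q <- iota 0 6] ++
  [seq vec5 (rect_pred f g p.1 p.2 q.1 q.2) | p <- ordered_pairs, q <- ordered_pairs] ++
  [:: vec5 predT; vec5 pred0].

Lemma cross_in_cell_vectors f g p q :
  p < 6 -> q < 6 -> vec5 (cross_pred f g p q) \in cell_vectors f g.
Proof.
move=> p6 q6; rewrite mem_cat; apply/orP; left.
by apply: (allpairs_f (fun p q => vec5 (cross_pred f g p q))); rewrite mem_iota.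
Qed.

Lemma rect_in_cell_vectors f g p1 p2 q1 q2 : p1 < 6 -> p2 < 6 -> q1 < 6 -> q2 < 6 ->
  vec5 (rect_pred f g p1 p2 q1 q2) \in cell_vectors f g.
Proof.
have ordered a b : a < 6 -> b < 6 -> (minn a b, maxn a b) \in ordered_pairs.
  move=> a6 b6; apply/allpairsPdep; exists (minn a b), (maxn a b).
  by rewrite !mem_iota; split=> //; lia.
have minmax z a b : (z == minn a b) || (z == maxn a b) = (z == a) || (z == b).
  by case: (leqP a b) => ab; rewrite ?(minn_idPl ab) ?(maxn_idPr ab)
    ?(minn_idPr (ltnW ab)) ?(maxn_idPl (ltnW ab)) // orbC.
move=> p16 p26 q16 q26; rewrite mem_cat; apply/orP; right; rewrite mem_cat; apply/orP; left.
have -> : vec5 (rect_pred f g p1 p2 q1 q2) =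
          vec5 (rect_pred f g (minn p1 p2) (maxn p1 p2) (minn q1 q2) (maxn q1 q2)).
  by apply: eq_map => i; rewrite /rect_pred !minmax.
exact: (allpairs_f (fun p q => vec5 (rect_pred f g p.1 p.2 q.1 q.2))
          (ordered _ _ p16 p26) (ordered _ _ q16 q26)).
Qed.

(* [labels X] replaces each value of [X] by the index of its first occurrence
   and satisfies [is_labelling]; there are 52 such sequences.  Values become
   indices in [0, 5], with 5 standing for every value not taken, whence the
   range [iota 0 6] in [cell_vectors]. *)
Definition is_labelling (s : seq nat) : bool :=
  all (fun i => (nth 0 s i <= i) && (nth 0 s (nth 0 s i) == nth 0 s i)) (iota 0 5).

Definition labellings : seq (seq nat) := [seq s <- all_seqs (iota 0 5) 5 | is_labelling s].

Definition triples : seq (seq bool) :=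
  [seq v <- all_seqs [:: true; false] 5 | count id v == 3].

Definition five_cells_check : bool :=
  all (fun x => all (fun y => uniq [seq (nth 0 x i, nth 0 y i) | i <- iota 0 5] ==>
      ~~ all (mem (cell_vectors (nth 0 x) (nth 0 y))) triples) labellings) labellings.

Lemma five_cells_checked : five_cells_check.
Proof. by vm_compute. Qed.

Section Labels.
Variables (T : eqType) (X : 'I_5 -> T).

Definition labels : seq nat := [seq index (X i) (codom X) | i <- enum 'I_5].

Lemma nth_codom5 (i : 'I_5) : nth (X i) (codom X) i = X i.
Proof. by rewrite codomE (nth_map i) ?size_enum_ord // nth_ord_enum. Qed.

Lemma nth_labels (i : 'I_5) : nth 0 labels i = index (X i) (codom X).
Proof. by rewrite (nth_map i) ?size_enum_ord // nth_ord_enum. Qed.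

Lemma labels_eq (i : 'I_5) p : (nth 0 labels i == index p (codom X)) = (X i == p).
Proof.
have Xi : X i \in codom X by exact: codom_f.
rewrite nth_labels; have [pX | pX] := boolP (p \in codom X).
  apply/eqP/eqP => [E | -> //].
  by rewrite -(nth_index (X i) Xi) E nth_index.
have -> : (X i == p) = false by apply: contraNF pX => /eqP <-.
by rewrite (memNindex pX) ltn_eqF ?index_mem.
Qed.

Lemma nth_labels_inj (i j : 'I_5) : nth 0 labels i = nth 0 labels j -> X i = X j.
Proof. by rewrite (nth_labels j) => /eqP; rewrite labels_eq => /eqP. Qed.

Lemma index_codom_lt5 (i : 'I_5) : index (X i) (codom X) < 5.
Proof. by have := index_mem (X i) (codom X); rewrite codom_f size_codom card_ord. Qed.

Lemma index_codom_lt6 p : index p (codom X) < 6.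
Proof. by have := index_size p (codom X); rewrite size_codom card_ord. Qed.

Lemma labels_labelling : labels \in labellings.
Proof.
rewrite mem_filter mem_all_seqs size_map size_enum_ord eqxx andTb; apply/andP; split.
  apply/allP => i; rewrite mem_iota => /andP [_ i5].
  have j5 := index_codom_lt5 (Ordinal i5).
  rewrite (nth_labels (Ordinal i5)) (nth_labels (Ordinal j5)).
  rewrite -[X (Ordinal j5)](nth_codom5 (Ordinal j5)) /= nth_index ?codom_f // eqxx andbT.
  by rewrite -[X _](nth_codom5 (Ordinal i5)) index_nth // size_codom card_ord.
by apply/allP => _ /mapP [i _ ->]; rewrite inE mem_iota index_codom_lt5.
Qed.

End Labels.

Lemma five_cells_not_shattered (T1 T2 : eqType) (X : 'I_5 -> T1) (Y : 'I_5 -> T2) :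
  injective (fun i => (X i, Y i)) -> ~ (forall S : {set 'I_5}, cell_trace X Y S).
Proof.
move=> XY_inj trace; set x := labels X; set y := labels Y.
have lab_inj : uniq [seq (nth 0 x i, nth 0 y i) | i <- iota 0 5].
  rewrite map_inj_in_uniq ?iota_uniq // => i j; rewrite !mem_iota /= => i5 j5 [].
  move=> /(@nth_labels_inj _ _ (Ordinal i5) (Ordinal j5)) XE.
  move=> /(@nth_labels_inj _ _ (Ordinal i5) (Ordinal j5)) YE.
  by have /(congr1 val) := XY_inj _ _ (congr2 pair XE YE).
have := five_cells_checked => /allP /(_ x (labels_labelling X)).
move=> /allP /(_ y (labels_labelling Y)); rewrite lab_inj implyTb.
case/allPn => v; rewrite mem_filter mem_all_seqs => /andP [_ /andP [/eqP v5 _]] /negP.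
apply; change (v \in cell_vectors (nth 0 x) (nth 0 y)).
have [ST|S0|[p [q Sc]]|[p1 [p2 [q1 [q2 Sr]]]]] := trace [set i : 'I_5 | nth false v i].
- suff -> : v = vec5 predT by rewrite !mem_cat mem_seq2 eqxx !orbT.
  by apply: vec5_nth => // i; move/setP: ST => /(_ i); rewrite !inE.
- suff -> : v = vec5 pred0 by rewrite !mem_cat mem_seq2 eqxx !orbT.
  by apply: vec5_nth => // i; move/setP: S0 => /(_ i); rewrite !inE.
- suff -> : v = vec5 (cross_pred (nth 0 x) (nth 0 y) (index p (codom X)) (index q (codom Y))).
    by apply: cross_in_cell_vectors; apply: index_codom_lt6.
  apply: vec5_nth => // i; move/setP: Sc => /(_ i); rewrite !inE => ->.
  by rewrite /cross_pred !labels_eq.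
- suff -> : v = vec5 (rect_pred (nth 0 x) (nth 0 y) (index p1 (codom X))
                 (index p2 (codom X)) (index q1 (codom Y)) (index q2 (codom Y))).
    by apply: rect_in_cell_vectors; apply: index_codom_lt6.
  apply: vec5_nth => // i; move/setP: Sr => /(_ i); rewrite !inE => ->.
  by rewrite /rect_pred !labels_eq.
Qed.

(** * Johnson graphs *)

Lemma cardsI1 (T : finType) (A : {set T}) x : #|A :&: [set x]| = (x \in A).
Proof.
have [xA | xA] := boolP (x \in A); first by rewrite (setIidPr _) ?cards1 ?sub1set.
rewrite (_ : _ :&: _ = set0) ?cards0 //; apply/setP => y; rewrite !inE.
by apply: contraNF xA => /andP [yA /eqP <-].
Qed.

Lemma card_setI_swap (T : finType) (v a w : {set T}) x y :
    v :\: a = [set x] -> a :\: v = [set y] ->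
  #|w :&: a| + (x \in w) = #|w :&: v| + (y \in w).
Proof.
move=> vax avy; have := cardsID v (w :&: a); have := cardsID a (w :&: v).
rewrite -!setIDA vax avy !cardsI1 setIAC; lia.
Qed.

Lemma swapE (T : finType) (v a : {set T}) x y :
  v :\: a = [set x] -> a :\: v = [set y] -> a = (v :\ x) :|: [set y].
Proof.
move=> /setP vax /setP avy; apply/setP => u; move: (vax u) (avy u); rewrite !inE.
by case: (u \in a); case: (u \in v) => //= <- <-; rewrite ?orbF ?orbT.
Qed.

Section Johnson.
Variables m k : nat.
Local Notation V := (johnson_vertex m k).

Lemma card_johnson_vertex (u : V) : #|val u| = k.
Proof. exact/eqP/(valP u). Qed.

Lemma johnson_setI_lt (u w : V) : u != w -> #|val u :&: val w| < k.
Proof.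
move=> uw; have := subset_leq_card (subsetIl (val u) (val w)).
rewrite card_johnson_vertex ltn_neqAle => ->; rewrite andbT.
apply: contra uw => /eqP uwu; apply/eqP/val_inj.
have /eqP uwu_eq : val u :&: val w == val u.
  by rewrite eqEcard subsetIl uwu card_johnson_vertex leqnn.
have uw_sub : val u \subset val w by rewrite -uwu_eq subsetIr.
by apply/eqP; rewrite eqEcard uw_sub !card_johnson_vertex leqnn.
Qed.

Lemma johnson_adj_swapE (v a w : V) x y :
    val v :\: val a = [set x] -> val a :\: val v = [set y] ->
  johnson_adj w a =
    (#|val v :\: val w| + (x \notin val v :\: val w) == 1 + (y \in val w :\: val v)).
Proof.
move=> vax avy.
have xv : x \in val v by have := set11 x; rewrite -vax => /setDP [].
have yv : y \notin val v by have := set11 y; rewrite -avy => /setDP [].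
have := card_setI_swap (val w) vax avy.
have := subset_leq_card (subsetIl (val v) (val w)).
rewrite /johnson_adj cardsD !inE xv (negbTE yv) /= andbT negbK setIC !card_johnson_vertex.
by case: (x \in val w); case: (y \in val w) => /= ? ?; apply/eqP/eqP; lia.
Qed.

Lemma johnson_adj_swap (v a : V) :
  johnson_adj v a -> exists x y, val v :\: val a = [set x] /\ val a :\: val v = [set y].
Proof.
rewrite /johnson_adj => /eqP vak.
have /cards1P [x ->] : #|val v :\: val a| == 1.
  by rewrite cardsD card_johnson_vertex; apply/eqP; lia.
have /cards1P [y ->] : #|val a :\: val v| == 1.
  by rewrite cardsD card_johnson_vertex setIC; apply/eqP; lia.
by exists x, y.
Qed.

Lemma cell_trace_johnson (I : finType) (v : V) (a : I -> V) (X Y : I -> 'I_m) :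
    (forall i, val v :\: val (a i) = [set X i] /\ val (a i) :\: val v = [set Y i]) ->
  forall w, cell_trace X Y [set i | johnson_adj w (a i)].
Proof.
move=> swap w; have adjE i := johnson_adj_swapE w (swap i).1 (swap i).2.
have same_card : #|val w :\: val v| = #|val v :\: val w|.
  by rewrite !cardsD !card_johnson_vertex setIC.
case t_eq : #|val v :\: val w| => [|[|[|t]]]; rewrite t_eq in same_card.
- apply: Or41; apply/setP => i; rewrite !inE adjE t_eq.
  move: t_eq same_card => /eqP; rewrite cards_eq0 => /eqP -> /eqP; rewrite cards_eq0.
  by move=> /eqP ->; rewrite !inE.
- apply: Or43; move: t_eq same_card => /eqP/cards1P [p vw] /eqP/cards1P [q wv].
  exists p, q; apply/setP => i; rewrite !inE adjE vw wv cards1 !inE /cross_pred.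
  by case: (X i == p); case: (Y i == q).
- apply: Or44; move: t_eq same_card => /eqP/cards2P [p1 [p2 [p12 vw]]].
  move=> /eqP/cards2P [q1 [q2 [_ wv]]].
  exists p1, p2, q1, q2; apply/setP => i.
  rewrite !inE adjE vw wv !in_set2 cards2 p12 /rect_pred.
  by case: (_ || _); case: (_ || _).
- apply: Or42; apply/setP => i; rewrite !inE adjE t_eq.
  by case: (_ \notin _); case: (_ \in _).
Qed.

Lemma johnson_shattered_le4 (A : {set V}) : shattered (@johnson_adj m k) A -> #|A| <= 4.
Proof.
move/shatteredP=> sh; rewrite leqNgt; apply/negP => A5.
pose a (i : 'I_5) : V := enum_val (widen_ord A5 i).
have a_inj : injective a.
  by move=> i j /enum_val_inj /(congr1 val) /= ij; apply: val_inj.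
have aA i : a i \in A by exact: enum_valP.
have [v /setP vA] := sh A (subxx A).
have vadj i : johnson_adj v (a i) by move: (vA (a i)); rewrite !inE aA.
have [X /fin_all_exists [Y swap]] := fin_all_exists (fun i => johnson_adj_swap (vadj i)).
have XY_inj : injective (fun i => (X i, Y i)).
  move=> i j [Xij Yij]; apply: a_inj; apply: val_inj.
  have [vai aiv] := swap i; have [vaj ajv] := swap j.
  by rewrite (swapE vai aiv) (swapE vaj ajv) Xij Yij.
apply: (five_cells_not_shattered XY_inj) => S.
have [|w /setP wS] := sh (a @: S).
  by apply/subsetP => _ /imsetP [i _ ->].
rewrite (_ : S = [set i | johnson_adj w (a i)]); first exact: cell_trace_johnson.
by apply/setP => i; move: (wS (a i)); rewrite !inE aA (mem_imset _ _ a_inj) => <-.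
Qed.

Lemma card_johnson : #|{: V}| = 'C(m, k).
Proof. by rewrite card_sig -cardsE card_draws card_ord. Qed.

Lemma johnson_adj_complete : (k == 1) || (k.+1 == m) ->
  forall u w : V, johnson_adj u w = (u != w).
Proof.
move=> k_extreme u w; rewrite /johnson_adj; have [<- | uw] := eqVneq u w.
  by rewrite setIid card_johnson_vertex addn1 gtn_eqF.
have := johnson_setI_lt uw; have := cardsUI (val u) (val w).
have := max_card (mem (val u :|: val w)); rewrite card_ord !card_johnson_vertex.
move: #|_ :|: _| #|_ :&: _| k_extreme => U I /orP [] /eqP k_eq U_le UI I_lt /=;
  by apply/eqP; lia.
Qed.

End Johnson.

(** * The lower bound, by embedding small Johnson graphs *)

Definition nat_set (m : nat) (s : seq nat) : {set 'I_m} := [set i : 'I_m | val i \in s].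

Lemma card_nat_set m s : uniq s -> all (gtn m) s -> #|nat_set m s| = size s.
Proof.
move=> s_uniq s_lt; have /eq_card -> : nat_set m s =i pmap insub s.
  by move=> i; rewrite inE mem_pmap_sub.
rewrite (card_uniqP _) ?pmap_sub_uniq // size_pmap_sub.
by apply/eqP; rewrite -all_count.
Qed.

Lemma card_nat_setI m s t :
  uniq s -> all (gtn m) s -> #|nat_set m s :&: nat_set m t| = count (mem t) s.
Proof.
move=> s_uniq s_lt.
have -> : nat_set m s :&: nat_set m t = nat_set m [seq i <- s | i \in t].
  by apply/setP => i; rewrite !inE mem_filter andbC.
rewrite card_nat_set ?filter_uniq ?size_filter //.
by apply/allP => i; rewrite mem_filter => /andP [_ /(allP s_lt)].
Qed.

Definition shift_in (d : nat) (s : seq nat) : seq nat := iota 0 d ++ map (addn d) s.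

Lemma count_shift_in d s t :
  count (mem (shift_in d t)) (shift_in d s) = d + count (mem t) s.
Proof.
rewrite count_cat count_map (@eq_in_count _ _ predT); last first.
  by move=> i i_lt; rewrite /= mem_cat i_lt.
rewrite count_predT size_iota; congr (_ + _); apply: eq_count => i.
change ((d + i \in shift_in d t) = (i \in t)).
by rewrite mem_cat mem_iota add0n ltnNge leq_addr andbF mem_map //; apply: addnI.
Qed.

Definition johnson_lists (m0 k0 : nat) : seq (seq nat) :=
  [seq s <- all_seqs (iota 0 m0) k0 | uniq s].

Lemma mem_johnson_lists m0 k0 s :
  s \in johnson_lists m0 k0 -> [/\ uniq s, size s = k0 & all (gtn m0) s].
Proof.
rewrite mem_filter mem_all_seqs => /and3P [s_uniq /eqP -> /allP s_lt]; split=> //.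
by apply/allP => i /s_lt; rewrite inE mem_iota.
Qed.

Definition small_shattering (m0 k0 : nat) (A : seq (seq nat)) : bool :=
  all (mem (johnson_lists m0 k0)) A &&
  all (fun b => has (fun w => [seq count (mem a) w + 1 == k0 | a <- A] == b)
                    (johnson_lists m0 k0))
      (all_seqs [:: true; false] (size A)).

Section Embedding.
Variables m k m0 k0 : nat.
Hypotheses (k0_le : k0 <= k) (m0_le : m0 + (k - k0) <= m).

Lemma shift_in_johnson s : s \in johnson_lists m0 k0 ->
  [/\ uniq (shift_in (k - k0) s), size (shift_in (k - k0) s) = k
     & all (gtn m) (shift_in (k - k0) s)].
Proof.
case/mem_johnson_lists => s_uniq s_size s_lt; split.
- rewrite cat_uniq iota_uniq (map_inj_uniq (@addnI _)) s_uniq andbT /=.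
  by apply/hasPn => _ /mapP [i _ ->]; rewrite /= mem_iota add0n ltnNge leq_addr andbF.
- by rewrite size_cat size_iota size_map s_size subnK.
rewrite all_cat all_map; apply/andP; split.
  by apply/allP => i; rewrite mem_iota /=; lia.
by apply/allP => i /(allP s_lt) /=; lia.
Qed.

Lemma card_shift_in s :
  s \in johnson_lists m0 k0 -> #|nat_set m (shift_in (k - k0) s)| == k.
Proof. by case/shift_in_johnson => s_uniq s_size s_lt; rewrite card_nat_set ?s_size. Qed.

Definition embed_vertex s (hs : s \in johnson_lists m0 k0) : johnson_vertex m k :=
  exist _ (nat_set m (shift_in (k - k0) s)) (card_shift_in hs).

Lemma johnson_adj_embed s t (hs : s \in johnson_lists m0 k0) (ht : t \in johnson_lists m0 k0) :
  johnson_adj (embed_vertex hs) (embed_vertex ht) = (count (mem t) s + 1 == k0).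
Proof.
have [s_uniq _ s_lt] := shift_in_johnson hs.
rewrite /johnson_adj /= card_nat_setI // count_shift_in.
by move: (count _ _) => c; apply/eqP/eqP; lia.
Qed.

Lemma shattered_embed A : small_shattering m0 k0 A ->
  exists2 S : {set johnson_vertex m k}, shattered (@johnson_adj m k) S & #|S| = size A.
Proof.
case/andP => /allP A_lists /allP patterns.
have hA (i : 'I_(size A)) : nth [::] A i \in johnson_lists m0 k0.
  by apply/A_lists/mem_nth.
apply: (shattered_of_patterns (g := fun i => embed_vertex (hA i))) => b.
have /patterns /hasP [w hw /eqP wb] : [seq i \in b | i <- enum 'I_(size A)]
    \in all_seqs [:: true; false] (size A).
  rewrite mem_all_seqs size_map size_enum_ord eqxx.
  by apply/allP => c _; rewrite !inE; case: c.
exists (embed_vertex hw) => i; rewrite johnson_adj_embed.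
move: (congr1 (nth false ^~ i) wb).
by rewrite (nth_map [::]) // (nth_map i) ?size_enum_ord // nth_ord_enum.
Qed.

End Embedding.

(* Each family consists of swaps of [iota 0 k0]. *)
Lemma small_shattering_J63 :
  small_shattering 6 3 [:: [:: 1; 2; 3]; [:: 1; 2; 4]; [:: 0; 2; 3]; [:: 0; 2; 5]].
Proof. by vm_compute. Qed.

Lemma small_shattering_J72 :
  small_shattering 7 2 [:: [:: 1; 2]; [:: 1; 3]; [:: 1; 4]; [:: 1; 5]].
Proof. by vm_compute. Qed.

Lemma small_shattering_J75 : small_shattering 7 5
  [:: [:: 1; 2; 3; 4; 5]; [:: 0; 2; 3; 4; 5]; [:: 0; 1; 3; 4; 5]; [:: 0; 1; 2; 4; 5]].
Proof. by vm_compute. Qed.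

Lemma bin2_lt16 m : m <= 6 -> 'C(m, 2) < 16.
Proof. by case: m => [|[|[|[|[|[|[|]]]]]]]. Qed.

Lemma johnson_shattered4 m k : k <= m -> 1 < k -> k < m - 1 -> 16 <= 'C(m, k) ->
  exists2 S : {set johnson_vertex m k}, shattered (@johnson_adj m k) S & #|S| = 4.
Proof.
move=> k_le k_gt1 k_lt C16.
have m7_of : 16 <= 'C(m, 2) -> 7 <= m.
  by move=> C2; rewrite ltnNge; apply: contraL C2 => /bin2_lt16; rewrite -ltnNge.
have [k3 | k_lt3] := leqP 3 k; first have [mk3 | mk_lt3] := leqP 3 (m - k).
- by apply: (shattered_embed _ _ small_shattering_J63); lia.
- have mk2 : m - k = 2 by lia.
  have m7 : 7 <= m by apply: m7_of; rewrite -[X in 'C(m, X)]mk2 bin_sub.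
  by apply: (shattered_embed _ _ small_shattering_J75); lia.
have k2 : k = 2 by lia.
have m7 : 7 <= m by apply: m7_of; rewrite -[X in 'C(m, X)]k2.
by apply: (shattered_embed _ _ small_shattering_J72); lia.
Qed.

Theorem mainTheorem8 (m k : nat) (hkm : k <= m) :
  vc_dim (@johnson_adj m k) = 4 <-> (1 < k /\ k < m - 1 /\ 16 <= 'C(m, k)).
Proof.
split=> [vc4 | [k_gt1 [k_lt C16]]].
- have vc_gt0 : 0 < vc_dim (@johnson_adj m k) by rewrite vc4.
  have [A shA] := vc_dim_attained vc_gt0; rewrite vc4 => A4.
  have C16 : 16 <= 'C(m, k) by have := shattered_card_le shA; rewrite A4 card_johnson.
  have not_complete : ~~ ((k == 1) || (k.+1 == m)).
    by apply: contraTN isT => /johnson_adj_complete /shattered_complete /(_ shA); rewrite A4.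
  have k_gt0 : k != 0 by apply: contraTneq C16 => ->; rewrite bin0.
  have k_ltm : k != m by apply: contraTneq C16 => ->; rewrite binn.
  by split; [| split]; lia.
apply/eqP; rewrite eqn_leq vc_dim_le /=; last exact: johnson_shattered_le4.
have [S shS <-] := johnson_shattered4 hkm k_gt1 k_lt C16.
exact: shattered_le_vc_dim.
Qed.
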